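(* In the standing setting below, let $x'\in\mathbb{X}$ and $y_0,y_1\in\mathbb{Y}$ with $y_0\neq y_1$, and let $f_i(x)=-c(x,y_i)+c(x',y_i)$ for $i=0,1$. If $x'$ lies in the interior of $\mathbb{X}$, then the set $\{x\in\mathbb{X}: f_0(x)\le f_1(x)\}$ has non-empty interior.
   Context: Standing setting: $\mathbb{X},\mathbb{Y}\subset\mathbb{R}^n$ are compact with non-empty interior; $c:\mathbb{X}\times\mathbb{Y}\to\mathbb{R}$ has continuous $D_xc$, $D_yc$, and continuous mixed second derivatives with $D^2_{xy}c=(D^2_{yx}c)^T$; for each $x$ the map $y\mapsto -D_xc(x,y)$ is injective on $\mathbb{Y}$ and for each $y$ the map $x\mapsto -D_yc(x,y)$ is injective on $\mathbb{X}$; $D^2_{xy}c(x,y)$ is invertible everywhere; for every $y$ the set $\{-D_yc(x,y):x\in\mathbb{X}\}$ is convex and for every $x$ the set $\{-D_xc(x,y):y\in\mathbb{Y}\}$ is convex. *)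

From HB Require Import structures.
From mathcomp Require Import all_boot all_order all_algebra.
From mathcomp Require Import all_classical all_reals all_analysis.
Set Implicit Arguments. Unset Strict Implicit. Unset Printing Implicit Defensive.
Import Order.TTheory GRing.Theory Num.Theory.
Import numFieldNormedType.Exports.
Local Open Scope classical_set_scope.
Local Open Scope ring_scope.

Section Costs.
Variables (R : realType) (n : nat).
Notation V := 'rV[R]_n.

Definition ebas (i : 'I_n) : V := delta_mx 0 i.

Definition Dx (c : V -> V -> R) (x y : V) : V :=
  \row_i derive (fun t => c t y) x (ebas i).
Definition Dy (c : V -> V -> R) (x y : V) : V :=
  \row_i derive (fun t => c x t) y (ebas i).
Definition Dxy (c : V -> V -> R) (x y : V) : 'M[R]_n :=
  \matrix_(i, j) derive (fun t => Dx c x t 0 i) y (ebas j).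
Definition Dyx (c : V -> V -> R) (x y : V) : 'M[R]_n :=
  \matrix_(i, j) derive (fun t => Dy c t y 0 i) x (ebas j).

Definition XY (X Y : set V) : set (V * V) := [set p | X p.1 /\ Y p.2].

Definition standing_setting (X Y : set V) (c : V -> V -> R) : Prop :=
  compact X /\ compact Y /\ interior X !=set0 /\ interior Y !=set0 /\
   (forall x y, X x -> Y y ->
      differentiable (fun t => c t y) x /\ differentiable (fun t => c x t) y) /\
   {within XY X Y, continuous (fun p => Dx c p.1 p.2)} /\
   {within XY X Y, continuous (fun p => Dy c p.1 p.2)} /\
   (forall x y, X x -> Y y ->
      differentiable (fun t => Dx c x t) y /\ differentiable (fun t => Dy c t y) x) /\
   {within XY X Y, continuous (fun p => Dxy c p.1 p.2)} /\
   {within XY X Y, continuous (fun p => Dyx c p.1 p.2)} /\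
   (forall x y, X x -> Y y -> Dxy c x y = (Dyx c x y)^T) /\
   (forall x y1 y2, X x -> Y y1 -> Y y2 -> - Dx c x y1 = - Dx c x y2 -> y1 = y2) /\
   (forall y x1 x2, Y y -> X x1 -> X x2 -> - Dy c x1 y = - Dy c x2 y -> x1 = x2) /\
   (forall x y, X x -> Y y -> Dxy c x y \in unitmx) /\
   (forall y, Y y ->
      convex_set ([set - Dy c x y | x in X] : set (convex_lmodType V))) /\
   (forall x, X x ->
      convex_set ([set - Dx c x y | y in Y] : set (convex_lmodType V))).

End Costs.

From HB Require Import structures.
From mathcomp Require Import all_boot all_order all_algebra.
From mathcomp Require Import all_classical all_reals all_analysis.
From mathcomp Require Import lra.
Import Order.TTheory GRing.Theory Num.Theory.
Import numFieldNormedType.Exports.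
Local Open Scope classical_set_scope.
Local Open Scope ring_scope.

(* Write G x := c(x, y1) - c(x, y0), so that f0 x <= f1 x iff G x <= G x'.
   If some point z of the interior of X had G z < G x', continuity of G
   would put a whole neighbourhood of z into the set.  Otherwise x' is a
   local minimum of G, so D_x c(x', y0) = D_x c(x', y1), and the twist
   condition forces y0 = y1. *)

Lemma derive_local_min_eq0 {R : realType} {V : normedModType R}
    (g : V -> R) (a v : V) :
  derivable g a v -> (\forall x \near a, g a <= g x) -> 'D_v g a = 0.
Proof.
move=> dg gmin.
pose q h : R := h^-1 *: (g (h *: v + a) - g a).
have qD : q @ 0^' --> 'D_v g a := dg.
have line_a : (fun h : R => h *: v + a) @ 0 --> a.
  rewrite -[X in _ --> X]add0r -(scale0r v).
  exact: cvgD (cvgZ cvg_id (cvg_cst _)) (cvg_cst _).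
have incr : \forall h \near 0, 0 <= g (h *: v + a) - g a.
  have : \forall h \near 0, g a <= g (h *: v + a) := line_a _ gmin.
  by apply: filterS => h; rewrite subr_ge0.
apply/eqP; rewrite eq_le; apply/andP; split.
- have qDl : q @ 0^'- --> 'D_v g a.
    apply: cvg_trans _ qD; apply: cvg_app.
    by apply: within_subset => h /lt_eqF/negbT.
  apply: cvgr_to_le qDl _.
  near=> h; apply: mulr_le0_ge0.
    by rewrite invr_le0 ltW //; near: h; exact: withinT.
  by near: h; apply: cvg_within.
- have qDr : q @ 0^'+ --> 'D_v g a.
    apply: cvg_trans _ qD; apply: cvg_app.
    by apply: within_subset => h /gt_eqF/negbT.
  apply: cvgr_to_ge qDr _.
  near=> h; apply: mulr_ge0.
    by rewrite invr_ge0 ltW //; near: h; exact: withinT.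
  by near: h; apply: cvg_within.
Unshelve. all: by end_near. Qed.

Lemma interior_sublevel {R : realType} {T : topologicalType} (X : set T)
    (G : T -> R) (t : R) (x : T) :
  interior X x -> {for x, continuous G} -> G x < t ->
  interior [set z | X z /\ G z <= t] x.
Proof.
move=> Xx Gx Gxt; rewrite /interior /=; near=> z; split.
- by near: z; exact: Xx.
- by apply: ltW; near: z; exact: Gx _ (lt_nbhsl Gxt).
Unshelve. all: by end_near. Qed.

Lemma local_min_of_empty_sublevel_interior {R : realType} {T : topologicalType}
    (X : set T) (G : T -> R) (x : T) :
  (forall z, interior X z -> {for z, continuous G}) -> interior X x ->
  interior [set z | X z /\ G z <= G x] = set0 ->
  \forall z \near x, G x <= G z.
Proof.
move=> Gcont Xx sublevel0; apply: filterS (nbhs_interior Xx) => z Xz.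
rewrite leNgt; apply/negP => Gzx.
rewrite -[False]/(set0 z) -sublevel0.
exact: interior_sublevel Xz (Gcont z Xz) Gzx.
Qed.

Lemma Dx_eq_at_local_min {R : realType} {n : nat}
    (c : 'rV[R]_n -> 'rV[R]_n -> R) (x y0 y1 : 'rV[R]_n) :
  differentiable (fun t => c t y0) x -> differentiable (fun t => c t y1) x ->
  (\forall z \near x, c x y1 - c x y0 <= c z y1 - c z y0) ->
  Dx c x y0 = Dx c x y1.
Proof.
move=> d0 d1 xmin; apply/rowP => i; rewrite !mxE.
have := derive_local_min_eq0 _ x (ebas R i)
  (derivableB (diff_derivable d1) (diff_derivable d0)) xmin.
by rewrite deriveB; [move=> /subr0_eq ->|exact: diff_derivable..].
Qed.

Theorem lemma2p18 (R : realType) (n : nat) (X Y : set 'rV[R]_n)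
  (c : 'rV[R]_n -> 'rV[R]_n -> R) :
  standing_setting X Y c ->
  forall (x' y0 y1 : 'rV[R]_n), X x' -> Y y0 -> Y y1 -> y0 <> y1 ->
  let f0 := fun x => - c x y0 + c x' y0 in
  let f1 := fun x => - c x y1 + c x' y1 in
  interior X x' ->
  interior [set x | X x /\ f0 x <= f1 x] !=set0.
Proof.
move=> ss x' y0 y1 Xx' Yy0 Yy1 y01 f0 f1 iXx'.
have [_ [_ [_ [_ [dc [_ [_ [_ [_ [_ [_ [twist _]]]]]]]]]]]] := ss.
pose G x := c x y1 - c x y0.
have Gcont z : interior X z -> {for z, continuous G}.
  move=> /interior_subset Xz.
  have [d0 _] := dc z y0 Xz Yy0; have [d1 _] := dc z y1 Xz Yy1.
  exact: continuousB (differentiable_continuous d1)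
                     (differentiable_continuous d0).
have sublevelE : [set x | X x /\ f0 x <= f1 x] = [set x | X x /\ G x <= G x'].
  apply/seteqP; split=> x [Xx le01]; split=> //;
    by move: le01; rewrite /f0 /f1 /G; lra.
apply/set0P/negP; rewrite sublevelE => /eqP sublevel0.
have x'min : \forall z \near x', G x' <= G z.
  exact: local_min_of_empty_sublevel_interior Gcont iXx' sublevel0.
apply/y01/(twist x' y0 y1 Xx' Yy0 Yy1); congr (- _).
have [d0 _] := dc x' y0 Xx' Yy0; have [d1 _] := dc x' y1 Xx' Yy1.
exact: Dx_eq_at_local_min d0 d1 x'min.
Qed.
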